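(* Let $d\ge2$ and let $f:\{0,1\}^r\to\{0,1\}$ satisfy $f(0,\dots,0)=1$. If $f$ contains $\mathrm{NAND}_d$ as a restriction and does not contain $\mathrm{IMPL}$ as a $0$-restriction, then $f$ contains $\mathrm{NAND}_d$ as a $0$-restriction.
   Context: $g:\{0,1\}^s\to\{0,1\}$ is a restriction of $f$ if there are pairwise disjoint, possibly empty, sets $X_1,\dots,X_s,Z_0,Z_1$ with union $[r]$ such that $g(x_1,\dots,x_s)=f(u)$. Here $u_i=x_j$ for $i\in X_j$, $u_i=0$ for $i\in Z_0$, and $u_i=1$ for $i\in Z_1$. It is a $0$-restriction if this holds with $Z_1=\emptyset$. $\mathrm{IMPL}(y_1,y_2)=\overline{y_1}\vee y_2$, and $\mathrm{NAND}_d(y_1,\dots,y_d)=\overline{y_1\wedge\cdots\wedge y_d}$. *)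

From mathcomp Require Import all_boot.
Set Implicit Arguments. Unset Strict Implicit. Unset Printing Implicit Defensive.

Definition boolfun (r : nat) := ('I_r -> bool) -> bool.

(* A partition of [r] into pairwise disjoint (possibly empty) sets
   X_1..X_s, Z_0, Z_1 is encoded by a map sigma : 'I_r -> 'I_s + bool:
   sigma i = inl j  means i \in X_j,  sigma i = inr b  means i \in Z_b. *)
Definition subst_input (r s : nat) (sigma : 'I_r -> 'I_s + bool)
  (x : 'I_s -> bool) : 'I_r -> bool :=
  fun i => match sigma i with inl j => x j | inr b => b end.

Definition is_restriction (r s : nat) (f : boolfun r) (g : boolfun s) : Prop :=
  exists sigma : 'I_r -> 'I_s + bool,
    forall x : 'I_s -> bool, g x = f (subst_input sigma x).

(* g is a 0-restriction of f : same, with Z_1 empty *)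
Definition is_0restriction (r s : nat) (f : boolfun r) (g : boolfun s) : Prop :=
  exists sigma : 'I_r -> 'I_s + bool,
    (forall i, sigma i <> inr true) /\
    forall x : 'I_s -> bool, g x = f (subst_input sigma x).

Definition IMPL : boolfun 2 := fun y => ~~ y ord0 || y (@Ordinal 2 1 isT).

Definition NAND (d : nat) : boolfun d := fun y => ~~ [forall i, y i].
Arguments NAND d y : clear implicits.

From mathcomp Require Import all_boot.
From Stdlib Require Import FunctionalExtensionality.

Set Implicit Arguments.
Unset Strict Implicit.
Unset Printing Implicit Defensive.

(* Let [sigma] realise NAND_d as a restriction of f, and let [h] be the
   0-restriction obtained by moving the constant-1 coordinates of [sigma] to
   0; then h(0) = f(0) = 1.  If h(x) = 0 for some x <> 1, wiring y1 to the
   coordinates where x is 1 and y2 to the former constant-1 coordinates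
   gives IMPL(y1, y2) as a 0-restriction of f.  Otherwise h is 1 off the
   all-ones input, so feeding the constant-1 coordinates from one NAND input
   x_j yields NAND_d: for x_j = 1 this is [sigma], for x_j = 0 it is [h]. *)

Section Rewiring.
Variables r s : nat.
Implicit Types (sigma : 'I_r -> 'I_s + bool) (x : 'I_s -> bool).

Definition zero_ones sigma : 'I_r -> 'I_s + bool :=
  fun i => if sigma i is inl j then inl j else inr false.

Definition merge_ones sigma (j : 'I_s) : 'I_r -> 'I_s + bool :=
  fun i => if sigma i is inr true then inl j else sigma i.

Lemma zero_ones_neq_one sigma i : zero_ones sigma i <> inr true.
Proof. by rewrite /zero_ones; case: (sigma i). Qed.

Lemma merge_ones_neq_one sigma j i : merge_ones sigma j i <> inr true.
Proof. by rewrite /merge_ones; case: (sigma i) => [|[]]. Qed.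

Lemma subst_zero_ones_false sigma :
  subst_input (zero_ones sigma) (fun _ => false) = (fun _ => false).
Proof.
by apply: functional_extensionality => i; rewrite /subst_input /zero_ones; case: (sigma i).
Qed.

Lemma subst_merge_ones_true sigma j x :
  x j -> subst_input (merge_ones sigma j) x = subst_input sigma x.
Proof.
move=> xj; apply: functional_extensionality => i.
by rewrite /subst_input /merge_ones; case: (sigma i) => [|[]].
Qed.

Lemma subst_merge_ones_false sigma j x :
  ~~ x j -> subst_input (merge_ones sigma j) x = subst_input (zero_ones sigma) x.
Proof.
move=> /negbTE xj; apply: functional_extensionality => i.
by rewrite /subst_input /merge_ones /zero_ones; case: (sigma i) => [|[]].
Qed.

End Rewiring.

Lemma NAND_of_false d (x : 'I_d -> bool) j : ~~ x j -> NAND d x.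
Proof. by move=> xjN; apply: contra xjN => /forallP; apply. Qed.

Section NandRestriction.
Variables (r d : nat) (f : boolfun r) (sigma : 'I_r -> 'I_d + bool).
Hypothesis f0 : f (fun _ => false) = true.
Hypothesis f_sigma : forall x, NAND d x = f (subst_input sigma x).

Let y1 : 'I_2 := ord0.
Let y2 : 'I_2 := @Ordinal 2 1 isT.

Definition impl_wiring (x : 'I_d -> bool) : 'I_r -> 'I_2 + bool :=
  fun i => match sigma i with
           | inl j => if x j then inl y1 else inr false
           | inr true => inl y2
           | inr false => inr false
           end.

Lemma impl_wiring_neq_one x i : impl_wiring x i <> inr true.
Proof. by rewrite /impl_wiring; case: (sigma i) => [j|[]] //; case: (x j). Qed.

Lemma subst_impl_wiring x y :
  subst_input (impl_wiring x) y =
  if y y2 then subst_input sigma (fun j => y y1 && x j)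
  else subst_input (zero_ones sigma) (fun j => y y1 && x j).
Proof.
case y2E: (y y2); apply: functional_extensionality => i;
  rewrite /subst_input /impl_wiring /zero_ones;
  case: (sigma i) => [j|[]] //=; by case: (x j); rewrite ?andbT ?andbF.
Qed.

Lemma IMPL_0restriction_of_zero x j :
  ~~ x j -> f (subst_input (zero_ones sigma) x) = false ->
  is_0restriction f IMPL.
Proof.
move=> xjN hx; exists (impl_wiring x); split; first exact: impl_wiring_neq_one.
move=> y; rewrite subst_impl_wiring /IMPL -/y1 -/y2.
case: (y y2); rewrite ?orbT ?orbF.
- by rewrite -f_sigma (@NAND_of_false _ _ j) // (negbTE xjN) andbF.
- by case: (y y1) => /=; [rewrite hx | rewrite subst_zero_ones_false f0].
Qed.

Lemma f_zero_ones_of_false :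
  ~ is_0restriction f IMPL ->
  forall x j, ~~ x j -> f (subst_input (zero_ones sigma) x) = true.
Proof.
move=> noIMPL x j xjN; case hx: (f _) => //.
by case: noIMPL; exact: (IMPL_0restriction_of_zero xjN hx).
Qed.

Lemma NAND_0restriction_of_restriction :
  0 < d -> ~ is_0restriction f IMPL -> is_0restriction f (NAND d).
Proof.
move=> d_gt0 noIMPL; pose j : 'I_d := Ordinal d_gt0.
exists (merge_ones sigma j); split; first exact: merge_ones_neq_one.
move=> x; case xj: (x j).
- by rewrite subst_merge_ones_true.
- have xjN : ~~ x j by rewrite xj.
  by rewrite subst_merge_ones_false // (f_zero_ones_of_false noIMPL xjN) (NAND_of_false xjN).
Qed.

End NandRestriction.

Theorem mainTheorem16 (r d : nat) (f : boolfun r) :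
  2 <= d ->
  f (fun _ => false) = true ->
  is_restriction f (NAND d) ->
  ~ is_0restriction f IMPL ->
  is_0restriction f (NAND d).
Proof.
move=> d_ge2 f0 [sigma f_sigma] noIMPL.
exact: (NAND_0restriction_of_restriction f0 f_sigma (ltnW d_ge2) noIMPL).
Qed.
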